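(* Fix $n\ge 2$. For any $\epsilon>0$ and any tuple $(\mu_1,\dots,\mu_{n-2})\in\mathbb{R}^{n-2}$, there exists a matrix $A\in SL(n,\mathbb{Z})$ which is diagonalizable over $\mathbb{R}$ (so all its eigenvalues are real) such that its eigenvalues $\lambda_1,\dots,\lambda_n$ can be ordered so that (1) $|\lambda_i-\mu_i|<\epsilon$ for $1\le i\le n-2$; (2) $|\lambda_{n-1}|>1/\epsilon$ and $|\lambda_n|<\epsilon$. *)

From HB Require Import structures.
From mathcomp Require Import all_boot all_order all_algebra.
Set Implicit Arguments. Unset Strict Implicit. Unset Printing Implicit Defensive.
Import Order.TTheory GRing.Theory Num.Theory.
Local Open Scope ring_scope.

Definition diag_with_eigenvalues (R : numFieldType) (n : nat)
    (A : 'M[int]_n) (lam : 'rV[R]_n) : Prop :=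
  exists P : 'M[R]_n,
    P \in unitmx /\ map_mx (fun z : int => z%:~R) A = invmx P *m diag_mx lam *m P.

(* Pick distinct integers k_0, ..., k_m with k_m = 0 and k_j / d close to
   mu_j, and let G x := prod_j (d x - k_j).  For a large integer M the monic
   integer polynomial x^(m+2) + (-1)^m - M G x has constant term (-1)^m, and
   since M G dominates x^(m+2) + (-1)^m at the points k_j / d +- 1/(4d) it
   changes sign around each k_j / d; being monic, it has one more root beyond
   all of them.  Its companion matrix has determinant 1 and is diagonalized by
   the Vandermonde matrix of these m+2 distinct real roots. *)

From HB Require Import structures.
From mathcomp Require Import all_boot all_order all_algebra all_fingroup polyrcf.
From mathcomp Require Import lra zify.
Import Order.TTheory GRing.Theory Num.Theory.
Local Open Scope ring_scope.

Definition companion_mx m (q : {poly int}) : 'M[int]_(m.+2) :=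
  \matrix_(i, j) if i == ord_max then - q`_j else (i.+1 == j :> nat)%:R.

Lemma det_companion_mx m (q : {poly int}) :
  q`_0 = (-1) ^+ m -> \det (companion_mx m q) = 1.
Proof.
move=> q0; rewrite (expand_det_col _ ord0) (bigD1 ord_max) //= big1 ?addr0.
  rewrite /cofactor !mxE eqxx q0.
  have -> : row' ord_max (col' ord0 (companion_mx m q)) = 1%:M.
    apply/matrixP => i j; rewrite !mxE eq_sym (negbTE (neq_lift _ _)) /=.
    by rewrite /bump /= ltnNge -ltnS ltn_ord add0n add1n eqSS.
  rewrite det_scalar expr1n mulr1 addn0.
  by rewrite exprS mulN1r mulrNN -expr2 -exprM mulnC exprM sqrrN !expr1n.
by move=> i /negbTE iN; rewrite !mxE iN mul0r.
Qed.

Lemma companion_mx_diag (R : numFieldType) m (q : {poly int}) (lam : 'rV[R]_(m.+2)) :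
  (size q <= m.+2)%N ->
  (forall i, root (map_poly intr ('X^(m.+2) + q)) (lam 0 i)) ->
  injective (lam 0) ->
  diag_with_eigenvalues (companion_mx m q) lam.
Proof.
move=> q_small lam_root lam_inj; set V := Vandermonde m.+2 lam.
have V_unit : V \in unitmx.
  rewrite unitmxE unitfE det_Vandermonde.
  apply/prodf_neq0 => i _; apply/prodf_neq0 => j ij.
  by rewrite subr_eq0 (inj_eq lam_inj) -val_eqE /= gtn_eqF.
have AV : map_mx intr (companion_mx m q) *m V = V *m diag_mx lam.
  apply/matrixP => i k; rewrite mul_mx_diag !mxE.
  have [->|iN] := eqVneq i ord_max.
    under eq_bigr => j _ do rewrite !mxE eqxx.
    move/rootP: (lam_root k); rewrite rmorphD /= map_polyXn hornerD hornerXn.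
    rewrite (horner_coef_wide (n := m.+2)); last exact: leq_trans (size_poly _ _) _.
    move/eqP; rewrite addr_eq0 => /eqP lamXn; rewrite /= -exprSr lamXn -sumrN.
    by apply: eq_bigr => j _; rewrite coef_map /= mulrNz mulNr.
  have i1_lt : (i.+1 < m.+2)%N.
    rewrite ltnS ltn_neqAle -ltnS ltn_ord andbT.
    by apply: contra iN => /eqP iN; apply/eqP/val_inj.
  rewrite (bigD1 (Ordinal i1_lt)) //= big1 ?addr0.
    by rewrite !mxE (negbTE iN) eqxx mul1r exprS mulrC.
  move=> j; rewrite -val_eqE /= !mxE (negbTE iN) eq_sym => /negbTE ->.
  by rewrite mul0r.
exists (invmx V); split; first by rewrite unitmx_inv.
by rewrite invmxK -AV mulmxK.
Qed.

Lemma dominated_subr_mul_lt0 (R : realDomainType) (h g M : R) :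
  `|h| < M * `|g| -> (h - M * g) * g < 0.
Proof.
move=> hg; have hg_le : h * g <= `|h| * `|g| by rewrite -normrM ler_norm.
have gg : g * g = `|g| * `|g| by rewrite -normrM ger0_norm // -expr2 sqr_ge0.
have g_gt0 : 0 < `|g|.
  by rewrite normr_gt0; apply: contraTneq hg => ->; rewrite normr0 mulr0 normr_lt0.
have : `|g| * (`|h| - M * `|g|) < 0 by rewrite pmulr_rlt0 // subr_lt0.
rewrite mulrBl -mulrA gg; lra.
Qed.

Lemma exists_nat_dominating (R : archiRealFieldType) (T : eqType) (f g : T -> R)
    (s : seq T) :
  {in s, forall x, g x != 0} -> exists M : nat, {in s, forall x, `|f x| < M%:R * `|g x|}.
Proof.
elim: s => [|x s IHs] g_neq0; first by exists 0%N.
have [|M dom] := IHs; first by move=> y ys; apply: g_neq0; rewrite inE ys orbT.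
have gx_gt0 : 0 < `|g x| by rewrite normr_gt0 g_neq0 ?mem_head.
pose Mx := Num.Def.archi_bound (`|f x| / `|g x|).
have Mx_dom : `|f x| < Mx%:R * `|g x|.
  by rewrite -ltr_pdivrMr // archi_boundP ?divr_ge0.
exists (maxn M Mx) => y; rewrite inE => /predU1P [->|ys].
  apply: lt_le_trans Mx_dom _; rewrite ler_pM2r // ler_nat; exact: leq_maxr.
apply: lt_le_trans (dom y ys) _; rewrite ler_wpM2r // ler_nat; exact: leq_maxl.
Qed.

Lemma prodr_lt0_single (R : realDomainType) (I : finType) (F : I -> R) j :
  F j < 0 -> (forall i, i != j -> 0 < F i) -> \prod_i F i < 0.
Proof.
by move=> Fj_lt0 F_gt0; rewrite (bigD1 j) //= nmulr_rlt0 // prodr_gt0.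
Qed.

Definition node_poly {n} (d : int) (k : 'I_n -> int) : {poly int} :=
  \prod_(j < n) (d%:P * 'X - (k j)%:P).

Lemma size_node_poly n d (k : 'I_n -> int) : d != 0 -> size (node_poly d k) = n.+1.
Proof.
move=> d_neq0; have size_lin j : size (d%:P * 'X - (k j)%:P) = 2%N.
  by rewrite -polyCN size_MXaddC polyC_eq0 (negbTE d_neq0) size_polyC d_neq0.
rewrite size_prod => [|j _]; last by rewrite -size_poly_gt0 size_lin.
by rewrite (eq_bigr _ (fun j _ => size_lin j)) sum_nat_const card_ord; lia.
Qed.

Lemma node_poly_coef0 n (d : int) (k : 'I_n -> int) j : k j = 0 -> (node_poly d k)`_0 = 0.
Proof.
move=> kj0; rewrite -horner_coef0 horner_prod (bigD1 j) //= !hornerE kj0.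
by rewrite oppr0 mul0r.
Qed.

Lemma horner_node_poly (R : comNzRingType) n d (k : 'I_n -> int) (x : R) :
  (map_poly intr (node_poly d k)).[x] = \prod_(j < n) (d%:~R * x - (k j)%:~R).
Proof.
rewrite rmorph_prod horner_prod; apply: eq_bigr => j _.
by rewrite rmorphB rmorphM /= !map_polyC map_polyX !hornerE.
Qed.

Definition perturbation m d (k : 'I_(m.+1) -> int) (M : nat) : {poly int} :=
  ((-1) ^+ m)%:P - (M%:Z)%:P * node_poly d%:Z k.

Lemma size_perturbation m d k M :
  (0 < d)%N -> (size (perturbation m d k M) <= m.+2)%N.
Proof.
move=> d_gt0; apply: leq_trans (size_polyD _ _) _; rewrite size_polyN geq_max.
rewrite (leq_trans (size_polyC_leq1 _)) //=; apply: leq_trans (size_polyMleq _ _) _.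
rewrite size_node_poly ?lt0r_neq0 //; case: (size _) (size_polyC_leq1 (M%:Z)) => [|[]] //.
Qed.

Lemma perturbation_coef0 m d k M :
  k ord_max = 0 -> (perturbation m d k M)`_0 = (-1) ^+ m.
Proof.
by move=> k0; rewrite coefB coefC coefCM (node_poly_coef0 _ _ _ _ k0) mulr0 subr0.
Qed.

Section NearbyRoots.
Variables (R : archiRcfType) (m d : nat) (k : 'I_(m.+1) -> int) (t : R).
Hypotheses (d_gt0 : (0 < d)%N) (k_inj : injective k).

Let node j : R := (k j)%:~R / d%:R.
Let del : R := (4 * d%:R)^-1.
Let G x : R := \prod_(j < m.+1) (d%:R * x - (k j)%:~R).
Let h x : R := x ^+ m.+2 + (-1) ^+ m.
Let far : R := `|t| + \sum_j `|node j| + 1.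
Let pts : seq R := far :: [seq node j + c | j <- enum 'I_(m.+1), c <- [:: - del; del]].

Let d_pos : (0 : R) < d%:R. Proof. by rewrite ltr0n. Qed.

Let del_gt0 : 0 < del.
Proof. by rewrite invr_gt0 mulr_gt0. Qed.

Let d_node j : d%:R * node j = (k j)%:~R.
Proof. by rewrite mulrC divfK ?lt0r_neq0. Qed.

Let d_del : d%:R * del = 4^-1.
Proof. by rewrite /del invfM mulrCA divff ?mulr1 ?lt0r_neq0. Qed.

Let del_le : del <= 4^-1.
Proof. by rewrite -d_del ler_peMl ?ler1n // ltW. Qed.

Let node_lt_far j : node j + 1 <= far.
Proof.
have := ler_norm (node j); have : `|node j| <= \sum_i `|node i|.
  by rewrite (bigD1 j) //= lerDl sumr_ge0.
have := normr_ge0 t; rewrite /far; lra.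
Qed.

Let t_lt_far : t < far.
Proof.
have := ler_norm t; have : 0 <= \sum_j `|node j| by rewrite sumr_ge0.
rewrite /far; lra.
Qed.

Let node_sep i j : i != j -> 1 <= ((k i - k j)%:~R : R) ^+ 2.
Proof.
by rewrite -(inj_eq k_inj) -subr_eq0 => kij; rewrite sqr_intr_ge1 ?intr_int ?intr_eq0.
Qed.

Lemma node_prod_sign_change j : G (node j - del) * G (node j + del) < 0.
Proof.
rewrite /G -big_split /=; apply: (@prodr_lt0_single _ _ _ j) => [|i ij].
  by rewrite !(mulrBr, mulrDr) d_node d_del; lra.
have := node_sep j i; rewrite eq_sym ij rmorphB /= => /(_ isT).
by rewrite !(mulrBr, mulrDr) d_node d_del; nra.
Qed.

Lemma node_prod_far_gt0 : 0 < G far.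
Proof.
apply: prodr_gt0 => j _; rewrite -d_node -mulrBr mulr_gt0 // subr_gt0.
by have := node_lt_far j; lra.
Qed.

Lemma near_nodes_neq i j x y :
  i != j -> `|x - node i| < del -> `|y - node j| < del -> x != y.
Proof.
move=> ij xi yj; apply: (contraTneq _ (node_sep _ _ ij)) => xy; rewrite -ltNge.
rewrite rmorphB /= -!d_node -mulrBr exprMn.
have u_small : (node i - node j) ^+ 2 < 4 * del ^+ 2.
  by move: xi yj; rewrite xy !ltr_norml; nra.
apply: lt_le_trans (_ : d%:R ^+ 2 * (4 * del ^+ 2) <= 1).
  by rewrite ltr_pM2l ?exprn_gt0.
by rewrite mulrCA -exprMn d_del; lra.
Qed.

Let G_pts_neq0 : {in pts, forall x, G x != 0}.
Proof.
move=> x; rewrite inE => /predU1P [->|]; first exact/lt0r_neq0/node_prod_far_gt0.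
case/allpairsP => -[j c] [_ /= c_in ->]; have := node_prod_sign_change j.
by move: c_in; rewrite !inE => /pred2P [] -> Gab; apply: contraTneq Gab => ->;
  rewrite ?(mul0r, mulr0) ltxx.
Qed.

Section Dominated.
Variable M : nat.
Hypothesis M_dom : {in pts, forall x, `|h x| < M%:R * `|G x|}.
Let F : {poly R} := map_poly (intr : int -> R) ('X^(m.+2) + perturbation m d k M).

Let horner_F x : F.[x] = h x - M%:R * G x.
Proof.
rewrite /F /perturbation rmorphD /= map_polyXn rmorphB /= map_polyC rmorphM /= map_polyC.
rewrite !(hornerD, hornerN, hornerM, hornerC, hornerXn) horner_node_poly.
by rewrite rmorphXn rmorphN1 addrA.
Qed.

Let F_mul_G_lt0 x : x \in pts -> F.[x] * G x < 0.
Proof. by move=> x_pts; rewrite horner_F dominated_subr_mul_lt0 ?M_dom. Qed.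

Let root_near_node j : {x | node j - del < x < node j + del & root F x}.
Proof.
have F_sign_change : F.[node j - del] * F.[node j + del] < 0.
  have := node_prod_sign_change j.
  have := F_mul_G_lt0 (node j - del) _; have := F_mul_G_lt0 (node j + del) _.
  rewrite !inE !(allpairs_f _ (mem_enum _ j)) ?inE ?eqxx ?orbT //.
  move=> /(_ isT) Fb /(_ isT) Fa Gab; nra.
have le_ab : node j - del <= node j + del by have := del_gt0; lra.
by have [x] := poly_ivtoo le_ab F_sign_change; rewrite in_itv /=; exists x.
Qed.

Let root_beyond_far : exists2 x, far < x & root F x.
Proof.
have F_far : F.[far] < 0.
  by have := F_mul_G_lt0 far (mem_head _ _); rewrite pmulr_llt0 ?node_prod_far_gt0.
have F_monic : lead_coef F = 1.
  rewrite lead_coef_map_eq lead_coefDl ?lead_coefXn ?rmorph1 ?oner_neq0 //;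
  by rewrite size_polyXn ltnS size_perturbation.
have [n0 F_large] : exists n0, forall x, n0 <= x -> 1 <= F.[x].
  by rewrite -F_monic; apply: poly_pinfty_gt_lc; rewrite F_monic ltr01.
have far_T : far <= Num.max n0 far by rewrite le_max lexx orbT.
have F_T : 0 < F.[Num.max n0 far].
  by apply: lt_le_trans ltr01 (F_large _ _); rewrite le_max lexx.
have [|x] := poly_ivtoo far_T (_ : F.[far] * F.[Num.max n0 far] < 0).
  by rewrite pmulr_llt0.
by rewrite in_itv /= => /andP [far_x _]; exists x.
Qed.

Lemma dominated_perturbation_roots : exists rho : 'I_(m.+2) -> R,
  [/\ injective rho, forall i, root F (rho i),
      forall j : 'I_(m.+1), `|rho (inord j) - node j| < del & t < rho ord_max].
Proof.
have [rb far_rb rb_root] := root_beyond_far.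
pose near j := s2val (root_near_node j).
have near_node j : `|near j - node j| < del.
  by rewrite ltr_distl; exact: s2valP (root_near_node j).
have near_lt j : near j < rb.
  have /andP [_ near_ub] := s2valP (root_near_node j).
  by rewrite /near; have := node_lt_far j; have := del_le; lra.
pose rho (i : 'I_(m.+2)) := if i == ord_max then rb else near (inord i).
have inord_neq_max (j : 'I_(m.+1)) : inord j != ord_max :> 'I_(m.+2).
  by rewrite -val_eqE /= inordK ?(ltn_eqF (ltn_ord j)) // leqW.
have lt_of_neq_max (i : 'I_(m.+2)) : i != ord_max -> (i < m.+1)%N.
  by rewrite -val_eqE => iN; rewrite ltn_neqAle iN -ltnS ltn_ord.
exists rho; split.
- move=> i1 i2; rewrite /rho.
  have [->|i1N] := eqVneq i1 ord_max; have [->|i2N] := eqVneq i2 ord_max => //.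
  + by move=> rb_near; have := near_lt (inord i2); rewrite -rb_near ltxx.
  + by move=> near_rb; have := near_lt (inord i1); rewrite near_rb ltxx.
  move=> /eqP near_eq; apply: val_inj; apply: contraTeq near_eq => i12.
  apply: near_nodes_neq (near_node _) (near_node _).
  by rewrite -val_eqE /= !inordK ?lt_of_neq_max.
- move=> i; rewrite /rho; case: eqP => // _; exact: (s2valP' (root_near_node _)).
- by move=> j; rewrite /rho (negbTE (inord_neq_max j)) inordK ?inord_val // leqW.
by rewrite /rho eqxx (lt_trans t_lt_far).
Qed.

End Dominated.

Theorem perturbation_roots : exists (M : nat) (rho : 'I_(m.+2) -> R),
  [/\ injective rho,
      forall i, root (map_poly intr ('X^(m.+2) + perturbation m d k M)) (rho i),
      forall j : 'I_(m.+1), `|rho (inord j) - (k j)%:~R / d%:R| < (4 * d%:R)^-1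
    & t < rho ord_max].
Proof.
have [M M_dom] := exists_nat_dominating _ _ h G _ G_pts_neq0.
by exists M; apply: dominated_perturbation_roots M_dom.
Qed.

End NearbyRoots.

(* The offset [j.+1] makes the nodes pairwise distinct modulo [m.+2] and
   keeps them away from the last node [0]. *)
Definition approx_node {R : archiRealFieldType} m (D : nat) (mu : 'I_m -> R)
    (j : 'I_(m.+1)) : int :=
  oapp (fun i : 'I_m => (m.+2)%:Z * Num.floor (mu i * D%:R) + (i.+1)%:Z) 0
    (insub (j : nat)).

Lemma approx_node_max (R : archiRealFieldType) m D (mu : 'I_m -> R) :
  approx_node m D mu ord_max = 0.
Proof. by rewrite /approx_node insubF //= ltnn. Qed.

Lemma approx_node_mod (R : archiRealFieldType) m D (mu : 'I_m -> R) j :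
  (approx_node m D mu j %% (m.+2)%:Z)%Z = if (j < m)%N then (j.+1)%:Z else 0.
Proof.
rewrite /approx_node; case: insubP => [i _ <-|/negbTE -> //].
rewrite ltn_ord /= mulrC modzMDl modz_small //.
by have := ltn_ord i; lia.
Qed.

Lemma approx_node_inj (R : archiRealFieldType) m D (mu : 'I_m -> R) :
  injective (approx_node m D mu).
Proof.
move=> j1 j2 /(congr1 (fun z => z %% (m.+2)%:Z)%Z); rewrite !approx_node_mod.
move=> res_eq; apply: ord_inj; move: res_eq (ltn_ord j1) (ltn_ord j2).
by case: (ltnP j1 m); case: (ltnP j2 m); lia.
Qed.

Lemma approx_node_near (R : archiRealFieldType) m D (mu : 'I_m -> R) (i : 'I_m) :
  (0 < D)%N ->
  `|(approx_node m D mu (inord i))%:~R / (m.+2 * D)%:R - mu i| < D%:R^-1.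
Proof.
move=> D_gt0; rewrite /approx_node inordK ?leqW // valK /=.
set z := Num.floor _; have z_le := floor_le (mu i * D%:R).
have z_gt := floorD1_gt (mu i * D%:R); rewrite -/z rmorphD /= in z_gt.
have D_pos : (0 : R) < D%:R by rewrite ltr0n.
have c_pos : (0 : R) < (m.+2 * D)%:R by rewrite natrM mulr_gt0.
rewrite -[mu i](mulfK (lt0r_neq0 c_pos)) -mulrBl normrM normfV (gtr0_norm c_pos).
rewrite ltr_pdivrMr // natrM [D%:R^-1 * _]mulrCA mulVf ?lt0r_neq0 // mulr1.
have i_lo : 1 <= (i.+1)%:R :> R by rewrite ler1n.
have i_hi : (i.+1)%:R + 1 <= (m.+2)%:R :> R by rewrite natr1 ler_nat !ltnS ltnW.
rewrite rmorphD rmorphM /= !pmulrn ltr_norml; apply/andP; split; nra.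
Qed.

Lemma node_tolerance_lt (R : realFieldType) (eps : R) m D :
  0 < eps -> 2 / eps < D%:R -> (4 * (m.+2 * D)%:R)^-1 + D%:R^-1 < eps.
Proof.
move=> eps_gt0 D_large.
have D_pos : 0 < D%:R :> R by apply: lt_trans D_large; rewrite divr_gt0.
have quarter_le : (4 * (m.+2 * D)%:R)^-1 <= D%:R^-1 :> R.
  rewrite natrM lef_pV2 ?posrE ?mulr_gt0 //.
  have : 1 <= (m.+2)%:R :> R by rewrite ler1n.
  nra.
apply: le_lt_trans (lerD quarter_le (lexx _)) _.
by rewrite -mulr2n -(mulr_natl D%:R^-1 2) ltr_pdivrMr // mulrC -ltr_pdivrMr.
Qed.

Theorem mainTheorem6 (R : archiRcfType) (m : nat) (eps : R) (heps : 0 < eps)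
    (mu : 'I_m -> R) :
  exists A : 'M[int]_(m.+2),
    \det A = 1 /\
    exists lam : 'rV[R]_(m.+2),
      diag_with_eigenvalues A lam /\
      (forall i : 'I_m, `|lam 0 (inord i) - mu i| < eps) /\
      eps^-1 < `|lam 0 (inord m)| /\
      `|lam 0 (inord m.+1)| < eps.
Proof.
pose D := Num.Def.archi_bound (2 / eps).
have D_large : 2 / eps < D%:R by apply: archi_boundP; rewrite divr_ge0 ?ltW.
have D_gt0 : (0 < D)%N by rewrite -(ltr0n R); apply: lt_trans D_large; rewrite divr_gt0.
have tol := node_tolerance_lt _ _ m _ heps D_large.
have d_gt0 : (0 < m.+2 * D)%N by rewrite muln_gt0.
have [M [rho [rho_inj rho_root rho_near rho_far]]] :=
  perturbation_roots _ m _ _ eps^-1 d_gt0 (approx_node_inj _ _ D mu).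
exists (companion_mx m (perturbation m (m.+2 * D) (approx_node m D mu) M)).
split; first exact/det_companion_mx/perturbation_coef0/approx_node_max.
exists (\row_i rho (tperm (inord m) ord_max i)); split.
  apply: companion_mx_diag => [|i|i j]; rewrite ?mxE //; first exact: size_perturbation.
  by move=> /rho_inj/perm_inj.
have inord_max : inord m.+1 = ord_max :> 'I_(m.+2) by apply: ord_inj; rewrite inordK.
rewrite !mxE tpermL inord_max tpermR; split; last split.
- move=> i; have i_lt_m := ltn_ord i.
  rewrite mxE tpermD; try by rewrite -val_eqE /= !inordK; lia.
  have := rho_near (inord i); rewrite inordK ?leqW // => near_node.
  have near_mu := approx_node_near _ _ _ mu i D_gt0.
  exact: le_lt_trans (ler_distD _ _ _) (lt_trans (ltrD near_node near_mu) tol).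
- by rewrite gtr0_norm // (lt_trans _ rho_far) ?invr_gt0.
have := rho_near ord_max; rewrite /= approx_node_max mul0r subr0 => near0.
by apply: lt_le_trans near0 (le_trans _ (ltW tol)); rewrite lerDl invr_ge0.
Qed.
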